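(* Consider the RCP model without queue feedback with parameters $C,a,\tau_1,\tau_2>0$, $\gamma\in(0,1]$, and bifurcation parameter $\kappa>0$, and let $\kappa_c=\dfrac{\pi}{2a\cos\!\left(\frac{\pi(\tau_1-\tau_2)}{2(\tau_1+\tau_2)}\right)}$ be the value at which its equilibrium $R^*=\gamma C/2$ loses local stability through a Hopf bifurcation. Let $c_1(0)$ denote the first Lyapunov coefficient of the Hopf normal form at $\kappa=\kappa_c$ (Hassard–Kazarinoff–Wan normalization, $\dot z=i\omega_0 z+c_1(0)z|z|^2+\cdots$ on the center manifold), and $\vartheta=\pi\tau_1/(\tau_1+\tau_2)\in(0,\pi)$. Then $$\operatorname{sign}\big(\operatorname{Re}c_1(0)\big)=\operatorname{sign}\!\left(\frac{2\pi\,\tilde f(\vartheta)}{(\gamma C)^2(\tau_1+\tau_2)}\right)=\operatorname{sign}\tilde f(\vartheta)<0,$$ with $\tilde f$ as in the context. Consequently $\mu_2=-\operatorname{Re}c_1(0)/\alpha'(0)>0$ and $\beta_2=2\operatorname{Re}c_1(0)<0$, where $\alpha'(0)=\operatorname{Re}(d\lambda/d\kappa)|_{\kappa=\kappa_c}>0$: for all parameter values, the Hopf bifurcation is super-critical and the bifurcating periodic solutions are asymptotically orbitally stable.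
   Context: RCP model without queue feedback: $$\frac{d}{dt}R(t)=\kappa\,\frac{2aR(t)}{\gamma C(\tau_1+\tau_2)}\big(\gamma C-y(t)\big),\quad y(t)=R(t-\tau_1)+R(t-\tau_2).$$ $\omega_0=\pi/(\tau_1+\tau_2)$ is the crossing frequency, and $\lambda(\kappa)$ is the root of the characteristic equation $\lambda+\kappa\frac{a}{\tau_1+\tau_2}(e^{-\lambda\tau_1}+e^{-\lambda\tau_2})=0$ with $\lambda(\kappa_c)=i\omega_0$. $$\tilde f(\vartheta)=-2\pi\sin^4\vartheta-\pi\sin^2\vartheta\cos^2(2\vartheta)-2\cos(2\vartheta)\sin^3\vartheta-\cos(2\vartheta)\sin^2\vartheta\cos\vartheta\,(\pi-2\vartheta).$$ Super-critical means $\mu_2>0$ (periodic orbits exist for $\kappa>\kappa_c$); asymptotic orbital stability of the orbits corresponds to Floquet exponent $\beta_2<0$. *)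

From Stdlib Require Import Reals Lra.
Open Scope R_scope.

Record Cx := mkC { Re : R ; Im : R }.
Definition Cr (x : R) : Cx := mkC x 0.
Definition Ci : Cx := mkC 0 1.
Definition Cadd (z w : Cx) : Cx := mkC (Re z + Re w) (Im z + Im w).
Definition Cneg (z : Cx) : Cx := mkC (- Re z) (- Im z).
Definition Csub (z w : Cx) : Cx := Cadd z (Cneg w).
Definition Cmul (z w : Cx) : Cx :=
  mkC (Re z * Re w - Im z * Im w) (Re z * Im w + Im z * Re w).
Definition Cconj (z : Cx) : Cx := mkC (Re z) (- Im z).
Definition Cnorm2 (z : Cx) : R := Re z * Re z + Im z * Im z.
Definition Cinv (z : Cx) : Cx := mkC (Re z / Cnorm2 z) (- Im z / Cnorm2 z).
Definition Cdiv (z w : Cx) : Cx := Cmul z (Cinv w).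
Definition Cscale (r : R) (z : Cx) : Cx := mkC (r * Re z) (r * Im z).
Definition Cexp (z : Cx) : Cx := mkC (exp (Re z) * cos (Im z)) (exp (Re z) * sin (Im z)).

(** * RCP model without queue feedback
    dR/dt = kappa * 2 a R(t) / (gamma C (tau1+tau2)) * (gamma C - R(t-tau1) - R(t-tau2)).
    Equilibrium R* = gamma C / 2.  Writing R = R* + u one gets
      u'(t) = L u_t + F(u_t),
      L phi = - kappa a/(tau1+tau2) (phi(-tau1) + phi(-tau2)),
      F phi = - k phi(0) (phi(-tau1) + phi(-tau2)),   k = 2 kappa a /(gamma C (tau1+tau2)),
    (F is exactly quadratic: there are no higher order terms). *)

Definition Tsum (tau1 tau2 : R) : R := tau1 + tau2.

Definition char_fun (a tau1 tau2 kappa : R) (lam : Cx) : Cx :=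
  Cadd lam (Cscale (kappa * a / Tsum tau1 tau2)
                   (Cadd (Cexp (Cscale (- tau1) lam)) (Cexp (Cscale (- tau2) lam)))).

Definition char_fun_deriv (a tau1 tau2 kappa : R) (lam : Cx) : Cx :=
  Csub (Cr 1) (Cscale (kappa * a / Tsum tau1 tau2)
                 (Cadd (Cscale tau1 (Cexp (Cscale (- tau1) lam)))
                       (Cscale tau2 (Cexp (Cscale (- tau2) lam))))).

Definition omega0 (tau1 tau2 : R) : R := PI / (tau1 + tau2).
Definition kappa_c (a tau1 tau2 : R) : R :=
  PI / (2 * a * cos (PI * (tau1 - tau2) / (2 * (tau1 + tau2)))).
Definition theta_of (tau1 tau2 : R) : R := PI * tau1 / (tau1 + tau2).

Definition ftilde (t : R) : R :=
  - 2 * PI * sin t ^ 4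
  - PI * sin t ^ 2 * cos (2 * t) ^ 2
  - 2 * cos (2 * t) * sin t ^ 3
  - cos (2 * t) * sin t ^ 2 * cos t * (PI - 2 * t).

(** On the center manifold  u_t(theta) = z e^{i w theta} + conj(z) e^{-i w theta} + W(z, conj z, theta),
    W = w20 z^2/2 + w11 z conj(z) + w02 conj(z)^2/2 + ..., the reduced equation is
    z' = i w z + g(z, conj z),  g = F(u_t) / Delta'(i w),   g = sum g_ij z^i conj(z)^j/(i! j!),
    and  c_1(0) = i/(2w) (g20 g11 - 2|g11|^2 - |g02|^2/3) + g21/2. *)
Section HKW.
Variables (C a tau1 tau2 gamma : R).

Let T := Tsum tau1 tau2.
Let w := omega0 tau1 tau2.
Let kc := kappa_c a tau1 tau2.
Let iw : Cx := mkC 0 w.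
Let k : R := 2 * kc * a / (gamma * C * T).
Let E1 : Cx := Cexp (Cscale (- tau1) iw).
Let E2 : Cx := Cexp (Cscale (- tau2) iw).
Let S : Cx := Cadd E1 E2.
Let D : Cx := char_fun_deriv a tau1 tau2 kc iw.

(** coefficients of z^2/2, z conj z, conj z^2/2 in F(z q + conj z conj q) *)
Let F20 : Cx := Cscale (- 2 * k) S.
Let F11 : Cx := Cscale (- k) (Cadd S (Cconj S)).
Let F02 : Cx := Cscale (- 2 * k) (Cconj S).

Definition hkw_g20 : Cx := Cdiv F20 D.
Definition hkw_g11 : Cx := Cdiv F11 D.
Definition hkw_g02 : Cx := Cdiv F02 D.

Definition hkw_w20 (th : R) : Cx :=
  Cadd (Cadd (Cmul (Cmul Ci (Cscale (/ w) hkw_g20)) (Cexp (mkC 0 (w * th))))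
             (Cmul (Cmul Ci (Cscale (/ (3 * w)) (Cconj hkw_g02))) (Cexp (mkC 0 (- w * th)))))
       (Cmul (Cdiv F20 (char_fun a tau1 tau2 kc (mkC 0 (2 * w)))) (Cexp (mkC 0 (2 * w * th)))).

Definition hkw_w11 (th : R) : Cx :=
  Cadd (Cadd (Cneg (Cmul (Cmul Ci (Cscale (/ w) hkw_g11)) (Cexp (mkC 0 (w * th)))))
             (Cmul (Cmul Ci (Cscale (/ w) (Cconj hkw_g11))) (Cexp (mkC 0 (- w * th)))))
       (Cdiv F11 (char_fun a tau1 tau2 kc (Cr 0))).

(** coefficient of z^2 conj z in F(u_t) on the center manifold *)
Let F21 : Cx :=
  Cscale (- k)
   (Cadd (Cadd (Cadd (hkw_w11 (- tau1)) (hkw_w11 (- tau2)))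
               (Cscale (/ 2) (Cadd (hkw_w20 (- tau1)) (hkw_w20 (- tau2)))))
         (Cadd (Cmul (hkw_w11 0) S) (Cscale (/ 2) (Cmul (hkw_w20 0) (Cconj S))))).

Definition hkw_g21 : Cx := Cdiv (Cscale 2 F21) D.

Definition lyap_c1 : Cx :=
  Cadd (Cmul (Cmul Ci (Cr (/ (2 * w))))
             (Csub (Cmul hkw_g20 hkw_g11)
                   (Cr (2 * Cnorm2 hkw_g11 + Cnorm2 hkw_g02 / 3))))
       (Cscale (/ 2) hkw_g21).
End HKW.

Definition sgn (x : R) : R := if Rlt_dec 0 x then 1 else if Rlt_dec x 0 then -1 else 0.

From Stdlib Require Import Reals Lra.
Open Scope R_scope.

(* Write th = PI tau1/(tau1+tau2), s = sin th, c = cos th.  At the crossing frequency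
   w0 = PI/(tau1+tau2) the delay phases are e^{-i w0 tau1} = c - i s and
   e^{-i w0 tau2} = -c - i s, so their sum S = -2 i s is purely imaginary.
   Consequently the coefficient F11 of z conj(z) in the nonlinearity vanishes, hence
   g11 = 0 and w11 = 0, and Re c1 = Re g21 / 2.  Evaluating the centre-manifold
   coefficient w20 at the three delays, the g20-contributions cancel and g21 is an
   explicit quotient; together with Delta'(i w0) = d + i PI/2 (d = crossing_d th)
   a routine field computation yields
       Re c1 = (2 PI f~(th) / ((gamma C)^2 (tau1+tau2))) / N(th),   N(th) > 0.
   Independently, f~ < 0 on (0, PI) by an elementary trigonometric estimate, and
   differentiating the characteristic equation along the root branch gives
   alpha'(kappa_c) |Delta'(i w0)|^2 = PI a s/(tau1+tau2) > 0.  The main theorem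
   combines these three facts. *)

Lemma Cexp_imag (x : R) : Cexp (mkC 0 x) = mkC (cos x) (sin x).
Proof. unfold Cexp; simpl; rewrite exp_0; f_equal; ring. Qed.

Lemma Cexp_scale_imag (t x : R) : Cexp (Cscale t (mkC 0 x)) = Cexp (mkC 0 (x * t)).
Proof. unfold Cscale; simpl; f_equal; f_equal; ring. Qed.

Definition hkw_k (C a tau1 tau2 gamma : R) : R :=
  2 * kappa_c a tau1 tau2 * a / (gamma * C * Tsum tau1 tau2).

Definition hkw_h20 (C a tau1 tau2 gamma : R) : Cx :=
  Cdiv (Cscale (-2 * hkw_k C a tau1 tau2 gamma)
          (Cadd (Cexp (Cscale (- tau1) (mkC 0 (omega0 tau1 tau2))))
                (Cexp (Cscale (- tau2) (mkC 0 (omega0 tau1 tau2))))))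
       (char_fun a tau1 tau2 (kappa_c a tau1 tau2) (mkC 0 (2 * omega0 tau1 tau2))).

(* Real part of Delta'(i w0) at kappa_c, as a function of th. *)
Definition crossing_d (t : R) : R := 1 + (PI - 2 * t) * cos t / (2 * sin t).

Definition lyap_denominator (t : R) : R :=
  sin t ^ 2 * (cos (2 * t) ^ 2 + 4 * sin t ^ 2) * (crossing_d t ^ 2 + PI ^ 2 / 4).

(* f~ factored through sin^2; the bracket is what the sign analysis estimates. *)
Lemma ftilde_factor (t : R) :
  ftilde t = - sin t ^ 2 * (PI * (cos (2 * t) ^ 2 + 2 * sin t ^ 2)
                           + cos (2 * t) * (2 * sin t + cos t * (PI - 2 * t))).
Proof. unfold ftilde; ring. Qed.

Section Crossing.
Variables C a tau1 tau2 gamma : R.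
Hypotheses (ht1 : 0 < tau1) (ht2 : 0 < tau2).
Local Notation w := (omega0 tau1 tau2).
Local Notation th := (theta_of tau1 tau2).
Local Notation kc := (kappa_c a tau1 tau2).

Lemma theta_bounds : 0 < th < PI.
Proof.
  pose proof PI_RGT_0. unfold theta_of.
  split; [apply Rdiv_lt_0_compat; nra|].
  apply Rmult_lt_reg_r with (tau1 + tau2); [lra|].
  unfold Rdiv; rewrite Rmult_assoc, Rinv_l by lra. nra.
Qed.

Lemma sin_theta_pos : 0 < sin th.
Proof. pose proof theta_bounds; apply sin_gt_0; lra. Qed.

Lemma omega0_pos : 0 < w.
Proof. unfold omega0; pose proof PI_RGT_0; apply Rdiv_lt_0_compat; lra. Qed.

Lemma omega0_tau1 : w * tau1 = th.
Proof. unfold omega0, theta_of; field; lra. Qed.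

Lemma omega0_tau2 : w * tau2 = PI - th.
Proof. unfold omega0, theta_of; field; lra. Qed.

Lemma pi_minus_2theta : PI - 2 * th = PI * (tau2 - tau1) / (tau1 + tau2).
Proof. unfold theta_of; field; lra. Qed.

(* cos(PI (tau1 - tau2) / (2 (tau1 + tau2))) = sin th. *)
Lemma kappa_c_sin : kc = PI / (2 * a * sin th).
Proof.
  unfold kappa_c.
  replace (PI * (tau1 - tau2) / (2 * (tau1 + tau2))) with (- (PI / 2 - th))
    by (unfold theta_of; field; lra).
  now rewrite cos_neg, cos_shift.
Qed.

Lemma phase_tau1 : cos (w * - tau1) = cos th /\ sin (w * - tau1) = - sin th.
Proof.
  replace (w * - tau1) with (- (w * tau1)) by ring.
  now rewrite omega0_tau1, cos_neg, sin_neg.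
Qed.

Lemma phase_tau2 : cos (w * - tau2) = - cos th /\ sin (w * - tau2) = - sin th.
Proof.
  replace (w * - tau2) with (- (w * tau2)) by ring.
  now rewrite omega0_tau2, cos_neg, sin_neg, Rtrigo_facts.cos_pi_minus, sin_PI_x.
Qed.

Lemma expi_tau1 : Cexp (mkC 0 (w * - tau1)) = mkC (cos th) (- sin th).
Proof. rewrite Cexp_imag; now destruct phase_tau1 as [-> ->]. Qed.

Lemma expi_tau2 : Cexp (mkC 0 (w * - tau2)) = mkC (- cos th) (- sin th).
Proof. rewrite Cexp_imag; now destruct phase_tau2 as [-> ->]. Qed.

Lemma expi_conj_tau1 : Cexp (mkC 0 (- w * - tau1)) = mkC (cos th) (sin th).
Proof.
  rewrite Cexp_imag; replace (- w * - tau1) with (w * tau1) by ring.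
  now rewrite omega0_tau1.
Qed.

Lemma expi_conj_tau2 : Cexp (mkC 0 (- w * - tau2)) = mkC (- cos th) (sin th).
Proof.
  rewrite Cexp_imag; replace (- w * - tau2) with (w * tau2) by ring.
  now rewrite omega0_tau2, Rtrigo_facts.cos_pi_minus, sin_PI_x.
Qed.

Lemma expi_double_tau1 : Cexp (mkC 0 (2 * w * - tau1)) = mkC (cos (2 * th)) (- sin (2 * th)).
Proof.
  rewrite Cexp_imag; replace (2 * w * - tau1) with (- (2 * (w * tau1))) by ring.
  now rewrite omega0_tau1, cos_neg, sin_neg.
Qed.

Lemma expi_double_tau2 : Cexp (mkC 0 (2 * w * - tau2)) = mkC (cos (2 * th)) (sin (2 * th)).
Proof.
  rewrite Cexp_imag; replace (2 * w * - tau2) with (- (2 * (w * tau2))) by ring.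
  rewrite omega0_tau2, cos_neg, sin_neg, !cos_2a_cos, !sin_2a.
  rewrite Rtrigo_facts.cos_pi_minus, sin_PI_x; f_equal; ring.
Qed.

Lemma phase_sum :
  Cadd (Cexp (Cscale (- tau1) (mkC 0 w))) (Cexp (Cscale (- tau2) (mkC 0 w)))
  = mkC 0 (- 2 * sin th).
Proof.
  rewrite !Cexp_scale_imag, expi_tau1, expi_tau2; unfold Cadd; simpl; f_equal; ring.
Qed.

(* Since S + conj S = 0, the nonlinearity has no z conj(z) term. *)
Lemma g11_zero : hkw_g11 C a tau1 tau2 gamma = mkC 0 0.
Proof.
  unfold hkw_g11; cbv zeta; rewrite phase_sum.
  unfold Cdiv, Cmul, Cscale, Cadd, Cconj; simpl; f_equal; ring.
Qed.

Lemma w11_zero (t : R) : hkw_w11 C a tau1 tau2 gamma t = mkC 0 0.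
Proof.
  unfold hkw_w11; cbv zeta; rewrite g11_zero, phase_sum.
  unfold Cdiv, Cmul, Cscale, Cadd, Cneg, Cconj, Ci; simpl; f_equal; ring.
Qed.

(* With g11 = 0 the first term of c1 is purely imaginary. *)
Lemma Re_lyap_c1_g21 :
  Re (lyap_c1 C a tau1 tau2 gamma) = Re (hkw_g21 C a tau1 tau2 gamma) / 2.
Proof.
  unfold lyap_c1; cbv zeta; rewrite g11_zero.
  generalize (hkw_g20 C a tau1 tau2 gamma) (hkw_g02 C a tau1 tau2 gamma) (hkw_g21 C a tau1 tau2 gamma).
  intros g20 g02 g21; cbn [Re Im Cadd Cmul Cscale Csub Cneg Cr Ci]; unfold Rdiv; ring.
Qed.

Hypothesis ha : 0 < a.

Lemma char_fun_deriv_crossing :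
  char_fun_deriv a tau1 tau2 kc (mkC 0 w) = mkC (crossing_d th) (PI / 2).
Proof.
  pose proof sin_theta_pos.
  unfold char_fun_deriv, crossing_d; rewrite !Cexp_scale_imag, expi_tau1, expi_tau2, kappa_c_sin.
  rewrite pi_minus_2theta.
  unfold Csub, Cadd, Cneg, Cscale, Cr, Tsum; simpl.
  f_equal; field; repeat split; lra.
Qed.

(* Delta(2 i w0) = 2 i w0 + 2 K cos(2 th), with K = kappa_c a/(tau1 + tau2). *)
Lemma char_fun_double :
  char_fun a tau1 tau2 kc (mkC 0 (2 * w))
  = mkC (PI * cos (2 * th) / (sin th * (tau1 + tau2))) (2 * w).
Proof.
  pose proof sin_theta_pos.
  unfold char_fun; rewrite !Cexp_scale_imag.
  rewrite expi_double_tau1, expi_double_tau2, kappa_c_sin.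
  unfold Cadd, Cscale, Tsum; simpl. f_equal; field; lra.
Qed.

Lemma hkw_w20_eq (t : R) :
  hkw_w20 C a tau1 tau2 gamma t =
  Cadd (Cadd (Cmul (Cmul Ci (Cscale (/ w) (hkw_g20 C a tau1 tau2 gamma))) (Cexp (mkC 0 (w * t))))
             (Cmul (Cmul Ci (Cscale (/ (3 * w)) (Cconj (hkw_g02 C a tau1 tau2 gamma))))
                   (Cexp (mkC 0 (- w * t)))))
       (Cmul (hkw_h20 C a tau1 tau2 gamma) (Cexp (mkC 0 (2 * w * t)))).
Proof. reflexivity. Qed.

(* Evaluating w20 at -tau1, -tau2 and 0, the contributions of g20 cancel. *)
Lemma hkw_g21_reduced :
  hkw_g21 C a tau1 tau2 gamma =
  Cdiv (Cscale (-2 * hkw_k C a tau1 tau2 gamma)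
          (Cadd (Cscale (- 2 * sin th / (3 * w)) (Cconj (hkw_g02 C a tau1 tau2 gamma)))
                (Cmul (mkC (cos (2 * th)) (sin th)) (hkw_h20 C a tau1 tau2 gamma))))
       (char_fun_deriv a tau1 tau2 kc (mkC 0 w)).
Proof.
  pose proof omega0_pos.
  unfold hkw_g21; cbv zeta; fold (hkw_k C a tau1 tau2 gamma).
  rewrite phase_sum, !w11_zero, !hkw_w20_eq, !Rmult_0_r, (Cexp_imag 0), cos_0, sin_0.
  rewrite expi_tau1, expi_tau2, expi_conj_tau1, expi_conj_tau2, expi_double_tau1, expi_double_tau2.
  generalize (hkw_g20 C a tau1 tau2 gamma) (hkw_g02 C a tau1 tau2 gamma) (hkw_h20 C a tau1 tau2 gamma)
    (char_fun_deriv a tau1 tau2 kc (mkC 0 w)).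
  intros [x20 y20] [x02 y02] [x y] D.
  unfold Cdiv, Cmul, Cscale, Cadd, Cconj, Ci; cbn [Re Im]; f_equal; f_equal; f_equal; field; lra.
Qed.

Hypotheses (hC : 0 < C) (hg : 0 < gamma).

Lemma hkw_k_value : hkw_k C a tau1 tau2 gamma = PI / (sin th * (tau1 + tau2) * (gamma * C)).
Proof.
  pose proof sin_theta_pos.
  unfold hkw_k, Tsum; rewrite kappa_c_sin; field; repeat split; nra.
Qed.

Lemma Re_lyap_c1_closed_form :
  Re (lyap_c1 C a tau1 tau2 gamma)
  = 2 * PI * ftilde th / ((gamma * C) ^ 2 * (tau1 + tau2)) / lyap_denominator th.
Proof.
  pose proof sin_theta_pos. pose proof PI_RGT_0.
  rewrite Re_lyap_c1_g21, hkw_g21_reduced.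
  unfold hkw_g02, hkw_h20; cbv zeta; fold (hkw_k C a tau1 tau2 gamma).
  rewrite phase_sum, char_fun_deriv_crossing, char_fun_double, hkw_k_value, ftilde_factor.
  unfold lyap_denominator, crossing_d, omega0.
  unfold Cdiv, Cinv, Cnorm2, Cmul, Cscale, Cadd, Cconj; cbn [Re Im].
  assert (0 < PI * sin th) by nra.
  pose proof (pow2_ge_0 (cos (2 * th))).
  pose proof (pow2_ge_0 (2 * sin th + (PI - 2 * th) * cos th)).
  field; repeat split; try lra; apply Rgt_not_eq; nra.
Qed.

End Crossing.

(* On (0, PI) the factors cos t and PI - 2 t have the same sign. *)
Lemma cos_pi_minus_2t_bounds (t : R) :
  0 < t < PI -> 0 <= cos t * (PI - 2 * t) <= PI * Rabs (cos t).
Proof.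
  intros [h0 h1]. destruct (Rle_dec t (PI / 2)).
  - assert (0 <= cos t) by (apply cos_ge_0; lra). rewrite Rabs_right by lra. split; nra.
  - assert (cos t <= 0) by (apply cos_le_0; lra). rewrite Rabs_left1 by lra. split; nra.
Qed.

(* f~ < 0 on (0, PI): the bracket of ftilde_factor is positive, trivially when
   cos 2t >= 0 and, when cos 2t < 0, because then |cos t| < 3/4 and PI > 8/5. *)
Lemma ftilde_neg (t : R) : 0 < t < PI -> ftilde t < 0.
Proof.
  intros ht.
  pose proof PI2_3_2 as hpi.
  pose proof (cos_pi_minus_2t_bounds t ht) as [hP0 hP1].
  assert (hs : 0 < sin t) by (apply sin_gt_0; lra).
  assert (hsc := sin2_cos2 t); unfold Rsqr in hsc.
  assert (hC2 : cos (2 * t) = 1 - 2 * sin t * sin t) by (rewrite cos_2a_sin; ring).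
  rewrite ftilde_factor.
  set (s := sin t) in *; set (c := cos t) in *; set (P := c * (PI - 2 * t)) in *.
  rewrite hC2; set (C2 := 1 - 2 * s * s).
  assert (hs2 : 0 < s ^ 2) by (apply pow_lt; lra).
  assert (0 < PI * (C2 ^ 2 + 2 * s ^ 2) + C2 * (2 * s + P)); [|nra].
  destruct (Rle_dec 0 C2).
  - assert (0 <= C2 * (2 * s + P)) by (apply Rmult_le_pos; lra).
    pose proof (pow2_ge_0 C2). nra.
  - (* C2 < 0 forces |c| < 3/4, hence P <= 3 PI / 4, and -C2 <= s^2 *)
    assert (hc : Rabs c <= 3 / 4).
    { assert (c * c < 1 / 2) by (unfold C2 in *; nra).
      destruct (Rcase_abs c); [rewrite Rabs_left by lra | rewrite Rabs_right by lra]; nra. }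
    assert (P <= 3 / 4 * PI) by nra.
    assert (- C2 <= s ^ 2) by (unfold C2; nra).
    assert (- C2 * (2 * s + P) <= s ^ 2 * (2 + 3 / 4 * PI)) by (apply Rmult_le_compat; nra).
    nra.
Qed.

Lemma deriv_locally_zero (f : R -> R) (x l delta : R) :
  0 < delta -> (forall k, Rabs (k - x) < delta -> f k = 0) ->
  derivable_pt_lim f x l -> l = 0.
Proof.
  intros hd hz hf. apply (uniqueness_limite f x l 0); [exact hf|].
  apply (derivable_pt_lim_locally_ext (fun _ => 0) f x (x - delta) (x + delta));
    [lra | | apply derivable_pt_lim_const].
  intros z hz'. symmetry; apply hz, Rabs_def1; lra.
Qed.

Lemma deriv_damped_phase (t : R) (f g trig dtrig : R -> R) (x df dg : R) :
  (forall y, derivable_pt_lim trig y (dtrig y)) ->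
  derivable_pt_lim f x df -> derivable_pt_lim g x dg ->
  derivable_pt_lim (fun k => exp (- t * f k) * trig (- t * g k)) x
    (exp (- t * f x) * (- t * df) * trig (- t * g x)
     + exp (- t * f x) * (dtrig (- t * g x) * (- t * dg))).
Proof.
  intros htrig hf hg.
  apply (derivable_pt_lim_mult (fun k => exp (- t * f k)) (fun k => trig (- t * g k))).
  - apply (derivable_pt_lim_comp (fun k => - t * f k) exp);
      [apply (derivable_pt_lim_scal f (- t)), hf | apply derivable_pt_lim_exp].
  - apply (derivable_pt_lim_comp (fun k => - t * g k) trig);
      [apply (derivable_pt_lim_scal g (- t)), hg | apply htrig].
Qed.

(* Derivative of the real (trig = cos) or imaginary (trig = sin) part of
   Delta(kappa, alpha(kappa) + i omega(kappa)), with A = a/(tau1 + tau2). *)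
Lemma deriv_char_component (A t1 t2 : R) (h f g trig dtrig : R -> R) (x dh df dg : R) :
  (forall y, derivable_pt_lim trig y (dtrig y)) ->
  derivable_pt_lim h x dh -> derivable_pt_lim f x df -> derivable_pt_lim g x dg ->
  derivable_pt_lim
    (fun k => h k + k * A * (exp (- t1 * f k) * trig (- t1 * g k)
                             + exp (- t2 * f k) * trig (- t2 * g k))) x
    (dh + (A * (exp (- t1 * f x) * trig (- t1 * g x) + exp (- t2 * f x) * trig (- t2 * g x))
           + x * A * ((exp (- t1 * f x) * (- t1 * df) * trig (- t1 * g x)
                       + exp (- t1 * f x) * (dtrig (- t1 * g x) * (- t1 * dg)))
                      + (exp (- t2 * f x) * (- t2 * df) * trig (- t2 * g x)
                         + exp (- t2 * f x) * (dtrig (- t2 * g x) * (- t2 * dg)))))).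
Proof.
  intros htrig hh hf hg.
  assert (hlin : derivable_pt_lim (fun k => k * A) x A).
  { pose proof (derivable_pt_lim_mult _ _ x _ _ (derivable_pt_lim_id x)
                  (derivable_pt_lim_const A x)) as H.
    unfold mult_fct, id, fct_cte in H. now replace (1 * A + x * 0) with A in H by ring. }
  pose proof (deriv_damped_phase t1 f g trig dtrig x df dg htrig hf hg) as h1.
  pose proof (deriv_damped_phase t2 f g trig dtrig x df dg htrig hf hg) as h2.
  exact (derivable_pt_lim_plus _ _ _ _ _ hh
           (derivable_pt_lim_mult _ _ _ _ _ hlin (derivable_pt_lim_plus _ _ _ _ _ h1 h2))).
Qed.

Section Transversality.
Variables a tau1 tau2 : R.
Hypotheses (ha : 0 < a) (ht1 : 0 < tau1) (ht2 : 0 < tau2).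
Local Notation w := (omega0 tau1 tau2).
Local Notation th := (theta_of tau1 tau2).
Local Notation kc := (kappa_c a tau1 tau2).
Variables (alpha omega : R -> R) (dalpha domega delta : R).
Hypotheses (hdelta : 0 < delta)
  (hroot : forall kappa, Rabs (kappa - kc) < delta ->
             char_fun a tau1 tau2 kappa (mkC (alpha kappa) (omega kappa)) = Cr 0)
  (halpha0 : alpha kc = 0) (homega0 : omega kc = w)
  (hda : derivable_pt_lim alpha kc dalpha) (hdw : derivable_pt_lim omega kc domega).

(* Differentiating Delta(kappa, lambda(kappa)) = 0 at kappa_c, split into real and
   imaginary parts: Delta'(i w0) lambda'(kappa_c) = -dDelta/dkappa = 2 i a s/(tau1+tau2). *)
Lemma branch_equations :
  dalpha * crossing_d th - domega * (PI / 2) = 0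
  /\ domega * crossing_d th + dalpha * (PI / 2) - 2 * a * sin th / (tau1 + tau2) = 0.
Proof.
  assert (re_branch : forall k, Rabs (k - kc) < delta ->
    alpha k + k * (a / Tsum tau1 tau2) * (exp (- tau1 * alpha k) * cos (- tau1 * omega k)
                                          + exp (- tau2 * alpha k) * cos (- tau2 * omega k)) = 0).
  { intros k hk. pose proof (f_equal Re (hroot k hk)) as E.
    unfold char_fun, Cadd, Cscale, Cexp, Cr in E; simpl in E. rewrite <- E. unfold Rdiv; ring. }
  assert (im_branch : forall k, Rabs (k - kc) < delta ->
    omega k + k * (a / Tsum tau1 tau2) * (exp (- tau1 * alpha k) * sin (- tau1 * omega k)
                                          + exp (- tau2 * alpha k) * sin (- tau2 * omega k)) = 0).
  { intros k hk. pose proof (f_equal Im (hroot k hk)) as E.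
    unfold char_fun, Cadd, Cscale, Cexp, Cr in E; simpl in E. rewrite <- E. unfold Rdiv; ring. }
  pose proof (deriv_locally_zero _ _ _ _ hdelta re_branch
    (deriv_char_component _ tau1 tau2 alpha alpha omega cos (fun y => - sin y) kc _ _ _
       derivable_pt_lim_cos hda hda hdw)) as re_deriv.
  pose proof (deriv_locally_zero _ _ _ _ hdelta im_branch
    (deriv_char_component _ tau1 tau2 omega alpha omega sin cos kc _ _ _
       derivable_pt_lim_sin hdw hda hdw)) as im_deriv.
  pose proof (sin_theta_pos tau1 tau2 ht1 ht2).
  destruct (phase_tau1 tau1 tau2 ht1 ht2) as [cos1 sin1].
  destruct (phase_tau2 tau1 tau2 ht1 ht2) as [cos2 sin2].
  rewrite halpha0, homega0, !Rmult_0_r, exp_0, !(Rmult_comm (- tau1) w),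
    !(Rmult_comm (- tau2) w), cos1, sin1, cos2, sin2, (kappa_c_sin a tau1 tau2 ht1 ht2) in re_deriv, im_deriv.
  unfold crossing_d; rewrite (pi_minus_2theta tau1 tau2 ht1 ht2).
  unfold Tsum in re_deriv, im_deriv.
  split; [rewrite <- re_deriv | rewrite <- im_deriv]; field; repeat split; lra.
Qed.

(* Solving the two linear equations: alpha'(kappa_c) |Delta'(i w0)|^2 = PI a sin th / (tau1 + tau2). *)
Lemma transversality : 0 < dalpha.
Proof.
  destruct branch_equations as [e1 e2].
  pose proof (sin_theta_pos tau1 tau2 ht1 ht2). pose proof PI_RGT_0.
  set (d := crossing_d th) in *.
  assert (key : dalpha * (d ^ 2 + PI ^ 2 / 4) - PI * a * sin th / (tau1 + tau2)
                = d * (dalpha * d - domega * (PI / 2))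
                  + PI / 2 * (domega * d + dalpha * (PI / 2) - 2 * a * sin th / (tau1 + tau2)))
    by (field; lra).
  rewrite e1, e2 in key.
  assert (0 < PI * a * sin th / (tau1 + tau2)).
  { apply Rdiv_lt_0_compat; [apply Rmult_lt_0_compat; [nra | assumption] | lra]. }
  assert (0 < d ^ 2 + PI ^ 2 / 4) by nra.
  nra.
Qed.

End Transversality.

Lemma sgn_neg (x : R) : x < 0 -> sgn x = -1.
Proof.
  intros hx; unfold sgn.
  destruct (Rlt_dec 0 x); [lra|]. destruct (Rlt_dec x 0); [reflexivity | lra].
Qed.

Lemma div_neg_pos (x y : R) : x < 0 -> 0 < y -> x / y < 0.
Proof. intros hx hy; unfold Rdiv; pose proof (Rinv_0_lt_compat y hy); nra. Qed.

Lemma lyap_denominator_pos (t : R) : 0 < t < PI -> 0 < lyap_denominator t.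
Proof.
  intros ht. assert (hs : 0 < sin t) by (apply sin_gt_0; lra).
  pose proof PI_RGT_0. pose proof (pow2_ge_0 (cos (2 * t))). pose proof (pow2_ge_0 (crossing_d t)).
  unfold lyap_denominator.
  apply Rmult_lt_0_compat; [apply Rmult_lt_0_compat; [apply pow_lt |] |]; nra.
Qed.

Theorem mainTheorem7 (C a tau1 tau2 gamma : R)
  (hC : 0 < C) (ha : 0 < a) (ht1 : 0 < tau1) (ht2 : 0 < tau2)
  (hg : 0 < gamma <= 1)
  (* lambda(kappa) = alpha(kappa) + i omega(kappa): the root branch of the
     characteristic equation through i omega0 at kappa = kappa_c *)
  (alpha omega : R -> R) (dalpha domega delta : R) (hdelta : 0 < delta)
  (hroot : forall kappa, Rabs (kappa - kappa_c a tau1 tau2) < delta ->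
             char_fun a tau1 tau2 kappa (mkC (alpha kappa) (omega kappa)) = Cr 0)
  (halpha0 : alpha (kappa_c a tau1 tau2) = 0)
  (homega0 : omega (kappa_c a tau1 tau2) = omega0 tau1 tau2)
  (hda : derivable_pt_lim alpha (kappa_c a tau1 tau2) dalpha)
  (hdw : derivable_pt_lim omega (kappa_c a tau1 tau2) domega) :
  let c1 := lyap_c1 C a tau1 tau2 gamma in
  let th := theta_of tau1 tau2 in
  sgn (Re c1) = sgn (2 * PI * ftilde th / ((gamma * C) ^ 2 * (tau1 + tau2)))
  /\ sgn (2 * PI * ftilde th / ((gamma * C) ^ 2 * (tau1 + tau2))) = sgn (ftilde th)
  /\ ftilde th < 0
  /\ 0 < dalpha
  /\ 0 < - Re c1 / dalpha
  /\ 2 * Re c1 < 0.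
Proof.
  intros c1 th.
  pose proof (theta_bounds tau1 tau2 ht1 ht2) as hth.
  pose proof (ftilde_neg th hth) as hf.
  assert (hX : 2 * PI * ftilde th / ((gamma * C) ^ 2 * (tau1 + tau2)) < 0).
  { apply div_neg_pos; [pose proof PI_RGT_0; nra |].
    apply Rmult_lt_0_compat; [apply pow_lt; nra | lra]. }
  assert (hRe : Re c1 < 0).
  { unfold c1; rewrite Re_lyap_c1_closed_form by lra.
    exact (div_neg_pos _ _ hX (lyap_denominator_pos th hth)). }
  pose proof (transversality a tau1 tau2 ha ht1 ht2 alpha omega dalpha domega delta
                hdelta hroot halpha0 homega0 hda hdw) as hspeed.
  split; [now rewrite (sgn_neg _ hRe), (sgn_neg _ hX) |].
  split; [now rewrite (sgn_neg _ hX), (sgn_neg _ hf) |].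
  repeat split; try assumption; [apply Rdiv_lt_0_compat |]; lra.
Qed.
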